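(* Let $k\geq 1$ and $g\geq 0$ be integers, let $a<b$, and let $a=\lambda_0<\lambda_1<\cdots<\lambda_g<\lambda_{g+1}=b$. Extend the knot sequence by coincident additional knots $\lambda_{-k}=\cdots=\lambda_{-1}=\lambda_0=a$ and $b=\lambda_{g+1}=\lambda_{g+2}=\cdots=\lambda_{g+k+1}$. Let $B_i^{k+1}$, $i=-k,\dots,g$, be the normalized B-splines of degree $k$ (order $k+1$) on this extended knot sequence, and for $i=-k,\dots,g-1$ define $$Z_i^{k+1}(x)=(k+1)\left(\frac{B_i^{k+1}(x)}{\lambda_{i+k+1}-\lambda_i}-\frac{B_{i+1}^{k+1}(x)}{\lambda_{i+k+2}-\lambda_{i+1}}\right),\qquad x\in[a,b].$$ Then the functions $Z_{-k}^{k+1},\dots,Z_{g-1}^{k+1}$ form a basis of the space $$\mathcal{Z}_k^{\Delta\lambda}[a,b]=\Big\{s\in \mathcal{S}_k^{\Delta\lambda}[a,b] \;:\; \int_a^b s(x)\,\mathrm{d}x=0\Big\}.$$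
   Context: $\mathcal{S}_k^{\Delta\lambda}[a,b]$ is the space of functions on $[a,b]$ that are polynomials of degree at most $k$ on each $[\lambda_i,\lambda_{i+1}]$, $i=0,\dots,g$, and are $k-1$ times continuously differentiable on $[a,b]$. Normalized B-splines are defined by the Cox–de Boor recursion: $B_i^1(x)=1$ if $x\in[\lambda_i,\lambda_{i+1})$ and $0$ otherwise (with the usual convention at the right endpoint $b$), and $B_i^{m+1}(x)=\frac{x-\lambda_i}{\lambda_{i+m}-\lambda_i}B_i^m(x)+\frac{\lambda_{i+m+1}-x}{\lambda_{i+m+1}-\lambda_{i+1}}B_{i+1}^m(x)$, with the convention that terms with zero denominator are omitted. The function $Z_i^{k+1}$ coincides with the derivative of the B-spline $B_i^{k+2}$; the denominators $\lambda_{i+k+1}-\lambda_i$ for $i=-k,\dots,g$ are positive. *)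

From Stdlib Require Import Reals.
From Coquelicot Require Import Coquelicot.
Open Scope R_scope.

Fixpoint sumR (n : nat) (f : nat -> R) : R :=
  match n with
  | O => 0
  | S n' => sumR n' f + f n'
  end.

(* Order-1 B-spline on the knot sequence t, with the usual convention at the
   right endpoint rb: B_i^1(rb) = 1 when t i < t (i+1) = rb. *)
Definition B1 (t : nat -> R) (rb : R) (i : nat) (x : R) : R :=
  if Rle_dec (t i) x then
    if Rlt_dec x (t (S i)) then 1
    else if Req_EM_T x rb then
           if Req_EM_T (t (S i)) rb then
             if Rlt_dec (t i) (t (S i)) then 1 else 0
           else 0
         else 0
  else 0.

(* bsp t rb m i = B_i^{m+1}, the normalized B-spline of order m+1 (degree m),
   by the Cox--de Boor recursion; terms with zero denominator are omitted. *)
Fixpoint bsp (t : nat -> R) (rb : R) (m : nat) (i : nat) (x : R) : R :=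
  match m with
  | O => B1 t rb i x
  | S m' =>
      (if Req_EM_T (t (i + m)%nat) (t i) then 0
       else (x - t i) / (t (i + m)%nat - t i) * bsp t rb m' i x)
    + (if Req_EM_T (t (i + m + 1)%nat) (t (S i)) then 0
       else (t (i + m + 1)%nat - x) / (t (i + m + 1)%nat - t (S i))
              * bsp t rb m' (S i) x)
  end.

(* Extended knot sequence, shifted by k so that it is indexed by nat:
   ext_knots k g lam j = lambda_{j-k}, j = 0 .. g+2k+1, with
   lambda_{-k} = ... = lambda_0 and lambda_{g+1} = ... = lambda_{g+k+1}. *)
Definition ext_knots (k g : nat) (lam : nat -> R) (j : nat) : R :=
  if Nat.leb j k then lam O
  else if Nat.leb (j - k) (S g) then lam (j - k)%nat
  else lam (S g).

(* Z_i^{k+1} with paper index i = j - k, j = 0 .. g+k-1. *)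
Definition Zfun (k g : nat) (lam : nat -> R) (j : nat) (x : R) : R :=
  let t := ext_knots k g lam in
  let b := lam (S g) in
  INR (S k) * (bsp t b k j x / (t (j + k + 1)%nat - t j)
               - bsp t b k (S j) x / (t (j + k + 2)%nat - t (S j))).

(* s is (m times) continuously differentiable on [a,b]: it agrees on [a,b]
   with a function that is C^m on R. *)
Definition Cm_on (m : nat) (a b : R) (s : R -> R) : Prop :=
  exists F : R -> R,
    (forall x, a <= x <= b -> F x = s x) /\
    (forall j, (j < m)%nat -> forall x, ex_derive (Derive_n F j) x) /\
    (forall x, continuous (Derive_n F m) x).

Definition spline_space (k g : nat) (lam : nat -> R) (s : R -> R) : Prop :=
  (forall i, (i <= g)%nat ->
     exists c : nat -> R,
       forall x, lam i <= x <= lam (S i) ->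
         s x = sumR (S k) (fun j => c j * x ^ j)) /\
  Cm_on (k - 1) (lam O) (lam (S g)) s.

Definition Zspace (k g : nat) (lam : nat -> R) (s : R -> R) : Prop :=
  spline_space k g lam s /\ is_RInt s (lam O) (lam (S g)) 0.

(* Write M_l = (k+1) B_l^{k+1} / (lambda_{l+k+1} - lambda_l) for the B-spline normalized to
   integral one, so that Z_i = M_i - M_{i+1}; equivalently Z_i is the derivative of the
   B-spline B_i^{k+2} of the next order, which vanishes at a and at b.  Hence Z_i is a spline
   with zero integral.  Summation by parts turns sum_i c_i Z_i into sum_l (c_l - c_{l-1}) M_l,
   so independence reduces to that of the B-splines, proved by differentiating off the knots
   and inducting on the degree.  Conversely every spline is a combination sum_l e_l M_l
   (integrate the representation of its derivative; the constant of integration is absorbed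
   by the partition of unity), and sum_l e_l M_l = sum_i (e_{-k} + ... + e_i) Z_i
   + (sum_l e_l) M_g; integrating over [a, b] shows sum_l e_l = 0 when the spline has
   zero integral. *)

From Pilot Require Import Defs.
From Stdlib Require Import Reals Lra Lia.
From Coquelicot Require Import Coquelicot.
Open Scope R_scope.

Lemma locally_of_radius (x d : R) (P : R -> Prop) : 0 < d ->
  (forall y, Rabs (y - x) < d -> P y) -> locally x P.
Proof. intros hd H. exists (mkposreal d hd). intros y hy. apply H. exact hy. Qed.

Lemma is_derive_affine (p q x : R) : is_derive (fun y => (y - p) * q) x q.
Proof. auto_derive; auto; ring. Qed.

Lemma is_derive_affine_rev (p q x : R) : is_derive (fun y => (p - y) * q) x (- q).
Proof. auto_derive; auto; ring. Qed.

Lemma is_derive_ext_radius (f g : R -> R) (x l d : R) : 0 < d ->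
  (forall y, Rabs (y - x) < d -> f y = g y) -> is_derive f x l -> is_derive g x l.
Proof. intros hd H. apply is_derive_ext_loc. exact (locally_of_radius x d _ hd H). Qed.

Lemma is_derive_eq_loc0 (f : R -> R) (x l d : R) : 0 < d ->
  (forall y, Rabs (y - x) < d -> f y = 0) -> is_derive f x l -> l = 0.
Proof.
  intros hd H hf. apply is_derive_unique in hf. rewrite <- hf. apply is_derive_unique.
  apply (is_derive_ext_radius (fun _ => 0) f x 0 d hd).
  - intros y hy. symmetry. auto.
  - apply (is_derive_const 0 x).
Qed.

Lemma finite_choice (P : nat -> R -> Prop) n : (forall i, (i <= n)%nat -> exists c, P i c) ->
  exists f : nat -> R, forall i, (i <= n)%nat -> P i (f i).
Proof.
  induction n; intros H.
  - destruct (H O (le_n _)) as [c hc]. exists (fun _ => c). intros i hi. replace i with O by lia. auto.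
  - destruct IHn as [f hf]; [intros; apply H; lia|].
    destruct (H (S n) (le_n _)) as [c hc].
    exists (fun i => if Nat.eqb i (S n) then c else f i). intros i hi.
    destruct (Nat.eqb_spec i (S n)) as [->|ne]; [auto|apply hf; lia].
Qed.

Lemma sumR_ext n f g : (forall j, (j < n)%nat -> f j = g j) -> sumR n f = sumR n g.
Proof.
  induction n; simpl; intros H; auto.
  rewrite IHn, H; [reflexivity | lia | intros; apply H; lia].
Qed.

Lemma sumR_plus n f g : sumR n (fun j => f j + g j) = sumR n f + sumR n g.
Proof. induction n; simpl; [lra|]. rewrite IHn; lra. Qed.

Lemma sumR_scal n c f : sumR n (fun j => c * f j) = c * sumR n f.
Proof. induction n; simpl; [lra|]. rewrite IHn; lra. Qed.

Lemma sumR_eq0 n f : (forall j, (j < n)%nat -> f j = 0) -> sumR n f = 0.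
Proof.
  induction n; simpl; intros H; auto.
  rewrite IHn, H; [lra | lia | intros; apply H; lia].
Qed.

Lemma sumR_shift n f : sumR (S n) f = f O + sumR n (fun j => f (S j)).
Proof. induction n; simpl; [lra|]. simpl in IHn. rewrite IHn. lra. Qed.

Definition unit_vec (p l : nat) : R := if Nat.eqb l p then 1 else 0.

Lemma unit_vec_eq p : unit_vec p p = 1.
Proof. unfold unit_vec. rewrite Nat.eqb_refl. auto. Qed.

Lemma unit_vec_neq p l : l <> p -> unit_vec p l = 0.
Proof. intros. unfold unit_vec. rewrite (proj2 (Nat.eqb_neq _ _) H). auto. Qed.

Lemma sumR_unit_vec n d p : (p < n)%nat -> sumR n (fun l => d l * unit_vec p l) = d p.
Proof.
  induction n; intros hp; [lia|]. simpl. destruct (Nat.eq_dec n p) as [->|ne].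
  - rewrite unit_vec_eq, sumR_eq0. lra. intros j hj. rewrite unit_vec_neq by lia. lra.
  - rewrite IHn, unit_vec_neq by lia. lra.
Qed.

Definition lag (c : nat -> R) (l : nat) : R := match l with O => 0 | S l' => c l' end.

Lemma sumR_by_parts n (c u : nat -> R) :
  sumR n (fun j => c j * (u j - u (S j))) =
  sumR n (fun l => (c l - lag c l) * u l) - lag c n * u n.
Proof. induction n; simpl; [lra|]. rewrite IHn. destruct n; simpl; lra. Qed.

Lemma lag_stationary (d : nat -> R) p n : (forall l, (p < l < n)%nat -> d l = lag d l) ->
  forall l, (p <= l < n)%nat -> d l = d p.
Proof.
  intros H l hl. induction l as [|l IH]; [f_equal; lia|].
  destruct (Nat.eq_dec (S l) p) as [->|ne]; auto. rewrite H by lia. apply IH. lia.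
Qed.

Lemma is_derive_sumR n (f : nat -> R -> R) (df : nat -> R) x :
  (forall j, (j < n)%nat -> is_derive (f j) x (df j)) ->
  is_derive (fun y => sumR n (fun j => f j y)) x (sumR n df).
Proof.
  induction n; intros H; simpl.
  - apply (is_derive_const 0 x).
  - apply (is_derive_plus (fun y => sumR n (fun j => f j y)) (f n)).
    + apply IHn; intros; apply H; lia.
    + apply H; lia.
Qed.

Lemma continuous_sumR n (f : nat -> R -> R) x :
  (forall j, (j < n)%nat -> continuous (f j) x) ->
  continuous (fun y => sumR n (fun j => f j y)) x.
Proof.
  induction n; intros H; simpl.
  - apply continuous_const.
  - apply (continuous_plus (fun y => sumR n (fun j => f j y)) (f n)).
    + apply IHn; intros; apply H; lia.
    + apply H; lia.
Qed.

Lemma is_RInt_sumR n (f : nat -> R -> R) (I : nat -> R) a b :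
  (forall j, (j < n)%nat -> is_RInt (f j) a b (I j)) ->
  is_RInt (fun y => sumR n (fun j => f j y)) a b (sumR n I).
Proof.
  induction n; intros H; simpl.
  - pose proof (is_RInt_const a b 0) as H0. unfold scal in H0; simpl in H0.
    unfold mult in H0; simpl in H0. rewrite Rmult_0_r in H0. exact H0.
  - apply (is_RInt_plus (fun y => sumR n (fun j => f j y)) (f n)).
    + apply IHn; intros; apply H; lia.
    + apply H; lia.
Qed.

Fixpoint is_poly (n : nat) (f : R -> R) : Prop :=
  match n with
  | O => exists c, forall x, f x = c
  | S n' => exists c h, is_poly n' h /\ forall x, f x = c + x * h x
  end.

Lemma is_poly_ext n f g : is_poly n f -> (forall x, f x = g x) -> is_poly n g.
Proof.
  destruct n; simpl; intros H e.
  - destruct H as [c hc]. exists c. intros; rewrite <- e; auto.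
  - destruct H as [c [h [hh hf]]]. exists c, h. split; auto. intros; rewrite <- e; auto.
Qed.

Lemma is_poly_weaken n f : is_poly n f -> is_poly (S n) f.
Proof.
  revert f. induction n; intros f H.
  - destruct H as [c hc]. exists c, (fun _ => 0). split.
    + exists 0; auto.
    + intros; rewrite hc; ring.
  - destruct H as [c [h [hh hf]]]. exists c, h. auto.
Qed.

Lemma is_poly_plus n f g : is_poly n f -> is_poly n g -> is_poly n (fun x => f x + g x).
Proof.
  revert f g. induction n; intros f g H1 H2.
  - destruct H1 as [c1 e1], H2 as [c2 e2]. exists (c1 + c2). intros; rewrite e1, e2; auto.
  - destruct H1 as [c1 [h1 [p1 e1]]], H2 as [c2 [h2 [p2 e2]]].
    exists (c1 + c2), (fun x => h1 x + h2 x). split; auto.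
    intros; rewrite e1, e2; ring.
Qed.

Lemma is_poly_scal n a f : is_poly n f -> is_poly n (fun x => a * f x).
Proof.
  revert f. induction n; intros f H.
  - destruct H as [c e]. exists (a * c). intros; rewrite e; auto.
  - destruct H as [c [h [p e]]]. exists (a * c), (fun x => a * h x). split; auto.
    intros; rewrite e; ring.
Qed.

Lemma is_poly_affine_mul n f p q : is_poly n f -> is_poly (S n) (fun x => (p * x + q) * f x).
Proof.
  intros H. apply (is_poly_ext _ (fun x => p * (x * f x) + q * f x)).
  - apply is_poly_plus.
    + apply is_poly_scal. exists 0, f. split; auto. intros; ring.
    + apply is_poly_weaken, is_poly_scal, H.
  - intros; ring.
Qed.

Lemma is_poly_monomials n f :
  is_poly n f <-> exists c : nat -> R, forall x, f x = sumR (S n) (fun j => c j * x ^ j).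
Proof.
  revert f. induction n; intros f; split.
  - intros [c e]. exists (fun _ => c). intros; simpl; rewrite e; ring.
  - intros [c e]. exists (c O). intros; rewrite e; simpl; ring.
  - intros [c [h [p e]]]. destruct (proj1 (IHn h) p) as [c' e'].
    exists (fun j => match j with O => c | S j' => c' j' end). intros x.
    rewrite sumR_shift, e, e', pow_O, Rmult_1_r, <- sumR_scal. f_equal.
    apply sumR_ext. intros; simpl; ring.
  - intros [c e]. exists (c O), (fun x => sumR (S n) (fun j => c (S j) * x ^ j)). split.
    + apply IHn. exists (fun j => c (S j)). auto.
    + intros x. rewrite e, sumR_shift, pow_O, Rmult_1_r, <- sumR_scal. f_equal.
      apply sumR_ext. intros; simpl; ring.
Qed.

Lemma is_poly_derive n f : is_poly (S n) f ->
  exists f', is_poly n f' /\ forall x, is_derive f x (f' x).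
Proof.
  revert f. induction n; intros f [c [h [p e]]].
  - destruct p as [c0 e0]. exists (fun _ => c0). split; [exists c0; auto|].
    intros x. apply (is_derive_ext (fun y => c + y * c0)); [intros; rewrite e, e0; auto|].
    auto_derive; auto; ring.
  - destruct (IHn h p) as [h' [p' d']].
    exists (fun x => h x + x * h' x). split.
    + apply is_poly_plus; auto. exists 0, h'. split; auto. intros; ring.
    + intros x. apply (is_derive_ext (fun y => c + y * h y)); [intros; rewrite e; auto|].
      replace (h x + x * h' x) with (0 + (1 * h x + x * h' x)) by ring.
      apply (is_derive_plus (fun _ => c) (fun y => y * h y)); [apply (is_derive_const c x)|].
      apply (is_derive_mult (fun y => y) h); auto using is_derive_id, Rmult_comm.
Qed.

Lemma is_poly_Derive n f : is_poly n f -> is_poly (pred n) (Derive f).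
Proof.
  destruct n as [|n]; intros H.
  - destruct H as [c e]. exists 0. intros x.
    rewrite (Derive_ext f (fun _ => c)) by auto. apply Derive_const.
  - destruct (is_poly_derive n f H) as [f' [p d]]. apply (is_poly_ext _ f'); auto.
    intros x. symmetry. apply is_derive_unique. auto.
Qed.

Lemma is_poly_ex_derive n f x : is_poly n f -> ex_derive f x.
Proof.
  intros H. destruct (is_poly_derive n f (is_poly_weaken n f H)) as [f' [_ d]].
  exists (f' x). auto.
Qed.

Lemma is_poly_Derive_n n f j : is_poly n f -> is_poly (n - j) (Derive_n f j).
Proof.
  intros H. induction j.
  - rewrite Nat.sub_0_r. exact H.
  - replace (n - S j)%nat with (pred (n - j)) by lia. now apply is_poly_Derive.
Qed.

(** * Gluing polynomial pieces *)

Lemma is_derive_glue (P Q : R -> R) (c l : R) :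
  is_derive P c l -> is_derive Q c l -> P c = Q c ->
  is_derive (fun y => if Rlt_dec y c then P y else Q y) c l.
Proof.
  intros hP hQ e. apply is_derive_Reals. apply is_derive_Reals in hP, hQ.
  intros eps heps. destruct (hP eps heps) as [d1 h1], (hQ eps heps) as [d2 h2].
  assert (hd : 0 < Rmin d1 d2) by (apply Rmin_pos; apply cond_pos).
  exists (mkposreal _ hd). intros h hh0 hh. simpl in hh.
  pose proof (Rmin_l d1 d2). pose proof (Rmin_r d1 d2).
  destruct (Rlt_dec c c) as [r|_]; [lra|].
  destruct (Rlt_dec (c + h) c).
  - rewrite <- e. apply h1; auto. lra.
  - apply h2; auto. lra.
Qed.

Lemma continuous_glue (P Q : R -> R) (c : R) :
  continuous P c -> continuous Q c -> P c = Q c ->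
  continuous (fun y => if Rlt_dec y c then P y else Q y) c.
Proof.
  intros hP hQ e. apply continuity_pt_filterlim. apply continuity_pt_filterlim in hP, hQ.
  intros eps heps. destruct (hP eps heps) as [d1 [hd1 h1]], (hQ eps heps) as [d2 [hd2 h2]].
  exists (Rmin d1 d2). split; [apply Rmin_pos; auto|].
  pose proof (Rmin_l d1 d2). pose proof (Rmin_r d1 d2).
  intros y [hy1 hy2]. simpl in *.
  destruct (Rlt_dec c c) as [r|_]; [lra|].
  destruct (Rlt_dec y c).
  - rewrite <- e. apply h1. split; auto. lra.
  - apply h2. split; auto. lra.
Qed.

Lemma is_derive_continuous (f : R -> R) (x l : R) : is_derive f x l -> continuous f x.
Proof. intros H. apply (ex_derive_continuous f x). exists l; exact H. Qed.

Lemma Derive_n_ext_interval (F p : R -> R) u v x : u < x < v ->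
  (forall y, u <= y <= v -> F y = p y) ->
  locally x (fun y => forall n, Derive_n F n y = Derive_n p n y).
Proof.
  intros hx H. apply (locally_of_radius x (Rmin (x - u) (v - x))); [apply Rmin_pos; lra|].
  intros y hy. pose proof (Rmin_l (x - u) (v - x)). pose proof (Rmin_r (x - u) (v - x)).
  apply Rabs_def2 in hy. intros n. apply Derive_n_ext_loc.
  apply (locally_of_radius y (Rmin (y - u) (v - y))); [apply Rmin_pos; lra|].
  intros z hz. pose proof (Rmin_l (y - u) (v - y)). pose proof (Rmin_r (y - u) (v - y)).
  apply Rabs_def2 in hz. apply H. lra.
Qed.

(* [V x] selects the polynomial piece [D 0 (V x)] in force at [x] and [VL c] the piece
   in force just left of [c]; [D i v] is the [i]-th derivative of the piece [v]. *)
Section Gluing.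
Variables (V VL : R -> nat -> R) (n : nat) (D : nat -> (nat -> R) -> R -> R).
Hypothesis V_locally : forall c, exists d, 0 < d /\
  (forall y, c <= y < c + d -> V y = V c) /\ (forall y, c - d < y < c -> V y = VL c).
Hypothesis D_derive : forall i v x, is_derive (D i v) x (D (S i) v x).
Hypothesis D_jump : forall c i, (i < n)%nat -> D i (VL c) c = D i (V c) c.

Definition glued (x : R) : R := D 0 (V x) x.

Definition glued_at (c : R) (i : nat) (y : R) : R :=
  if Rlt_dec y c then D i (VL c) y else D i (V c) y.

Lemma glued_at_derive c i y : (S i < n)%nat -> is_derive (glued_at c i) y (glued_at c (S i) y).
Proof.
  intros hi. unfold glued_at at 2.
  destruct (Rlt_dec y c) as [r|r]; [|destruct (Req_dec y c) as [->|ne]].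
  - apply (is_derive_ext_radius (D i (VL c)) _ y _ (c - y)); [lra| |apply D_derive].
    intros z hz. apply Rabs_def2 in hz. unfold glued_at. destruct (Rlt_dec z c); [auto|lra].
  - apply is_derive_glue; [rewrite <- D_jump by lia | |apply D_jump; lia]; apply D_derive.
  - apply (is_derive_ext_radius (D i (V c)) _ y _ (y - c)); [lra| |apply D_derive].
    intros z hz. apply Rabs_def2 in hz. unfold glued_at. destruct (Rlt_dec z c); [lra|auto].
Qed.

Lemma glued_at_continuous c i y : (i < n)%nat -> continuous (glued_at c i) y.
Proof.
  intros hi.
  destruct (Rlt_dec y c) as [r|r]; [|destruct (Req_dec y c) as [->|ne]].
  - apply (continuous_ext_loc _ (D i (VL c))).
    + apply (locally_of_radius y (c - y)); [lra|]. intros z hz. apply Rabs_def2 in hz.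
      unfold glued_at. destruct (Rlt_dec z c); [auto|lra].
    + eapply is_derive_continuous, D_derive.
  - apply continuous_glue; [eapply is_derive_continuous, D_derive ..|apply D_jump; lia].
  - apply (continuous_ext_loc _ (D i (V c))).
    + apply (locally_of_radius y (y - c)); [lra|]. intros z hz. apply Rabs_def2 in hz.
      unfold glued_at. destruct (Rlt_dec z c); [lra|auto].
    + eapply is_derive_continuous, D_derive.
Qed.

Lemma Derive_n_glued_near c : exists d, 0 < d /\ forall i, (i < n)%nat ->
  forall y, Rabs (y - c) < d -> Derive_n glued i y = glued_at c i y.
Proof.
  destruct (V_locally c) as [d [hd [hr hl]]]. exists d. split; auto.
  induction i; intros hi y hy.
  - simpl. unfold glued, glued_at. apply Rabs_def2 in hy.
    destruct (Rlt_dec y c); [rewrite hl | rewrite hr]; auto; lra.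
  - simpl. rewrite (Derive_ext_loc _ (glued_at c i)).
    + apply is_derive_unique, glued_at_derive, hi.
    + apply (locally_of_radius y (d - Rabs (y - c))); [lra|].
      intros z hz. apply IHi; [lia|].
      pose proof (Rabs_triang (z - y) (y - c)) as T.
      replace (z - y + (y - c)) with (z - c) in T by ring. lra.
Qed.

Lemma Derive_n_glued i x : (i < n)%nat -> Derive_n glued i x = D i (V x) x.
Proof.
  intros hi. destruct (Derive_n_glued_near x) as [d [hd H]].
  rewrite H; auto; [|rewrite Rminus_diag, Rabs_R0; auto].
  unfold glued_at. destruct (Rlt_dec x x); [lra|auto].
Qed.

Lemma ex_derive_Derive_n_glued i x : (S i < n)%nat -> ex_derive (Derive_n glued i) x.
Proof.
  intros hi. destruct (Derive_n_glued_near x) as [d [hd H]].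
  apply (ex_derive_ext_loc (glued_at x i)).
  - apply (locally_of_radius x d _ hd). intros; symmetry; apply H; auto; lia.
  - eexists. apply glued_at_derive, hi.
Qed.

Lemma continuous_Derive_n_glued i x : (i < n)%nat -> continuous (Derive_n glued i) x.
Proof.
  intros hi. destruct (Derive_n_glued_near x) as [d [hd H]].
  apply (continuous_ext_loc _ (glued_at x i)).
  - apply (locally_of_radius x d _ hd). intros; symmetry; apply H; auto.
  - apply glued_at_continuous, hi.
Qed.
End Gluing.

(** * The Cox--de Boor recursion over frozen order-one values *)

Lemma is_derive_val (f : R -> R) (x l l' : R) : is_derive f x l -> l = l' -> is_derive f x l'.
Proof. intros H ->. exact H. Qed.

Section CoxDeBoor.
Variable t : nat -> R.

(* [cox_de_boor m j v x] runs the recursion for [B_j^{m+1}(x)] starting from order-one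
   values [v]; for [v] frozen to the values on one knot interval it is the polynomial piece
   of [B_j^{m+1}] there.  Zero denominators need no case split because [/ 0 = 0]. *)
Fixpoint cox_de_boor (m j : nat) (v : nat -> R) (x : R) : R :=
  match m with
  | O => v j
  | S m' => (x - t j) / (t (j + m) - t j) * cox_de_boor m' j v x
            + (t (j + m + 1) - x) / (t (j + m + 1) - t (S j)) * cox_de_boor m' (S j) v x
  end.

Fixpoint cox_de_boor_D (i m j : nat) (v : nat -> R) (x : R) : R :=
  match i, m with
  | O, _ => cox_de_boor m j v x
  | S _, O => 0
  | S i', S m' => INR m * (cox_de_boor_D i' m' j v x / (t (j + m) - t j)
                          - cox_de_boor_D i' m' (S j) v x / (t (j + m + 1) - t (S j)))
  end.

Lemma omit_zero_denominator (p q r s : R) :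
  (if Req_EM_T p q then 0 else r / (p - q) * s) = r / (p - q) * s.
Proof. destruct (Req_EM_T p q) as [->|_]; [rewrite Rminus_diag, Rdiv_0_r; ring | reflexivity]. Qed.

Lemma bsp_cox_de_boor rb m j x :
  Defs.bsp t rb m j x = cox_de_boor m j (fun l => Defs.B1 t rb l x) x.
Proof.
  revert j. induction m; intros j; [reflexivity|].
  cbn [bsp cox_de_boor]. rewrite !omit_zero_denominator, !IHm. reflexivity.
Qed.

Lemma cox_de_boor_ext m j v1 v2 x : (forall l, v1 l = v2 l) ->
  cox_de_boor m j v1 x = cox_de_boor m j v2 x.
Proof. revert j. induction m; intros j H; simpl; auto. rewrite !(IHm _ H). reflexivity. Qed.

Lemma cox_de_boor_sub m j v1 v2 x :
  cox_de_boor m j (fun l => v1 l - v2 l) x = cox_de_boor m j v1 x - cox_de_boor m j v2 x.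
Proof. revert j. induction m; intros j; simpl; auto. rewrite !IHm. ring. Qed.

Lemma cox_de_boor_D_sub i m j v1 v2 x :
  cox_de_boor_D i m j (fun l => v1 l - v2 l) x = cox_de_boor_D i m j v1 x - cox_de_boor_D i m j v2 x.
Proof.
  revert m j. induction i; intros m j; [apply cox_de_boor_sub|].
  destruct m; cbn [cox_de_boor_D]; [ring|]. rewrite !IHi. unfold Rdiv. ring.
Qed.

Lemma cox_de_boor_eq0_from m j v x : (forall l, (j <= l)%nat -> v l = 0) ->
  cox_de_boor m j v x = 0.
Proof.
  revert j. induction m; intros j H; simpl; [apply H; lia|].
  rewrite IHm, (IHm (S j)); [ring| |]; intros; apply H; lia.
Qed.

Lemma is_poly_cox_de_boor m j v : is_poly m (cox_de_boor m j v).
Proof.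
  revert j. induction m; intros j; [exists (v j); auto|].
  apply (is_poly_ext _ (fun x =>
    (/ (t (j + S m) - t j) * x + - (t j / (t (j + S m) - t j))) * cox_de_boor m j v x
    + (- / (t (j + S m + 1) - t (S j)) * x + t (j + S m + 1) / (t (j + S m + 1) - t (S j)))
      * cox_de_boor m (S j) v x)).
  - apply is_poly_plus; apply is_poly_affine_mul, IHm.
  - intros x. cbn [cox_de_boor]. unfold Rdiv. ring.
Qed.

Section Monotone.
Hypothesis t_mono : forall i j, (i <= j)%nat -> t i <= t j.

Lemma is_derive_cox_de_boor m j v x :
  is_derive (cox_de_boor (S m) j v) x (cox_de_boor_D 1 (S m) j v x).
Proof.
  revert j. induction m; intros j.
  - cbn. auto_derive; auto. unfold Rdiv. ring.
  - set (A := / (t (j + S (S m)) - t j)).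
    set (C := / (t (S j + S (S m)) - t (S j))).
    apply (is_derive_ext (fun y => (y - t j) * A * cox_de_boor (S m) j v y
                                 + (t (S j + S (S m)) - y) * C * cox_de_boor (S m) (S j) v y)).
    { intros y. cbn [cox_de_boor]. replace (j + S (S m) + 1)%nat with (S j + S (S m))%nat by lia.
      reflexivity. }
    eapply is_derive_val.
    { apply (is_derive_plus (fun y => (y - t j) * A * cox_de_boor (S m) j v y)).
      - apply (is_derive_mult (fun y => (y - t j) * A)); auto using is_derive_affine, Rmult_comm.
      - apply (is_derive_mult (fun y => (t (S j + S (S m)) - y) * C));
          auto using is_derive_affine_rev, Rmult_comm. }
    assert (K : / (t (S j + S m) - t (S j))
                * ((t (j + S (S m)) - t j) * A - (t (S j + S (S m)) - t (S j)) * C) = 0).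
    { destruct (Req_dec (t (S j + S m)) (t (S j))) as [e|e].
      - rewrite e, Rminus_diag, Rinv_0. ring.
      - replace (S j + S m)%nat with (j + S (S m))%nat in e |- * by lia.
        pose proof (t_mono j (S j) ltac:(lia)). pose proof (t_mono (S j) (j + S (S m)) ltac:(lia)).
        pose proof (t_mono (j + S (S m)) (S j + S (S m)) ltac:(lia)).
        unfold A, C. rewrite !Rinv_r by lra. ring. }
    cbn [cox_de_boor_D cox_de_boor]. repeat change (@plus _ ?a ?b) with (a + b).
    repeat change (@mult _ ?a ?b) with (a * b).
    replace (j + S m + 1)%nat with (S j + S m)%nat by lia.
    replace (j + S (S m) + 1)%nat with (S j + S (S m))%nat by lia.
    replace (S j + S m + 1)%nat with (S j + S (S m))%nat by lia.
    replace (t (S j + S m)) with (t (j + S (S m))) in K |- * by (f_equal; lia).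
    rewrite !S_INR in *. unfold Rdiv. fold A C.
    match goal with |- ?L = ?Rt => assert (E : L - Rt = - (INR m + 1) * (cox_de_boor m (S j) v x * (
      / (t (j + S (S m)) - t (S j)) * ((t (j + S (S m)) - t j) * A - (t (S j + S (S m)) - t (S j)) * C))))
      by ring end.
    rewrite K, Rmult_0_r, Rmult_0_r in E. lra.
Qed.

Lemma is_derive_cox_de_boor_D i m j v x :
  is_derive (cox_de_boor_D i m j v) x (cox_de_boor_D (S i) m j v x).
Proof.
  revert m j. induction i; intros m j; destruct m.
  - exact (is_derive_const (v j) x).
  - apply is_derive_cox_de_boor.
  - exact (is_derive_const 0 x).
  - apply (is_derive_ext (fun y => INR (S m) * (cox_de_boor_D i m j v y * / (t (j + S m) - t j)
             - cox_de_boor_D i m (S j) v y * / (t (j + S m + 1) - t (S j))))); [reflexivity|].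
    eapply is_derive_val; [|reflexivity].
    apply is_derive_scal, (is_derive_minus (fun y => _ * _) (fun y => _ * _));
      exact (is_derive_scal_l _ _ _ _ (IHi _ _)).
Qed.

Definition null_on_empty_spans (v : nat -> R) : Prop := forall l, t l = t (S l) -> v l = 0.

Lemma cox_de_boor_empty_span m j v x : null_on_empty_spans v -> t j = t (j + S m) ->
  cox_de_boor m j v x = 0.
Proof.
  revert j. induction m; intros j hv e.
  - apply hv. rewrite e. f_equal. lia.
  - pose proof (t_mono j (j + S m) ltac:(lia)). pose proof (t_mono (j + S m) (j + S (S m)) ltac:(lia)).
    pose proof (t_mono j (S j) ltac:(lia)). pose proof (t_mono (S j) (S j + S m) ltac:(lia)).
    replace (S j + S m)%nat with (j + S (S m))%nat in * by lia.
    cbn [cox_de_boor]. rewrite (IHm j), (IHm (S j)); auto; [ring| |lra].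
    replace (S j + S m)%nat with (j + S (S m))%nat by lia. lra.
Qed.

(* Each interior [cox_de_boor m (S l)] is reached from [l] and from [S l] with weights
   summing to one. *)
Lemma sumR_cox_de_boor_telescope m v x n : null_on_empty_spans v ->
  sumR (S n) (fun l => cox_de_boor (S m) l v x) =
  (x - t 0) / (t (S m) - t 0) * cox_de_boor m 0 v x + sumR n (fun l => cox_de_boor m (S l) v x)
  + (t (n + S m + 1) - x) / (t (n + S m + 1) - t (S n)) * cox_de_boor m (S n) v x.
Proof.
  intros hv. induction n; [simpl; ring|].
  change (sumR (S (S n)) (fun l => cox_de_boor (S m) l v x)) with
    (sumR (S n) (fun l => cox_de_boor (S m) l v x) + cox_de_boor (S m) (S n) v x).
  rewrite IHn. cbn [cox_de_boor sumR].
  replace (n + S m + 1)%nat with (S n + S m)%nat by lia.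
  replace (S n + S m + 1)%nat with (S n + S (S m))%nat by lia.
  assert (W : (t (S n + S m) - x) / (t (S n + S m) - t (S n)) * cox_de_boor m (S n) v x
              + (x - t (S n)) / (t (S n + S m) - t (S n)) * cox_de_boor m (S n) v x
              = cox_de_boor m (S n) v x).
  { destruct (Req_dec (t (S n + S m)) (t (S n))) as [e|e].
    - rewrite (cox_de_boor_empty_span m (S n) v x hv) by auto. ring.
    - unfold Rdiv. rewrite <- Rmult_plus_distr_r, <- Rmult_plus_distr_r.
      replace (t (S n + S m) - x + (x - t (S n))) with (t (S n + S m) - t (S n)) by ring.
      rewrite Rinv_r by lra. ring. }
  lra.
Qed.

Lemma sumR_cox_de_boor_S m v x n : null_on_empty_spans v ->
  cox_de_boor m 0 v x = 0 -> cox_de_boor m (S n) v x = 0 ->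
  sumR (S n) (fun l => cox_de_boor (S m) l v x) = sumR (S n) (fun l => cox_de_boor m l v x).
Proof.
  intros hv h0 hn. rewrite sumR_cox_de_boor_telescope, h0, hn, sumR_shift, h0 by exact hv. ring.
Qed.
End Monotone.

(* Across an interior knot [t (S q)] the frozen order-one values jump from [unit_vec q]
   to [unit_vec (S q)]. *)
Section KnotJump.
Variable q : nat.
Hypothesis knot_left : t q < t (S q).
Hypothesis knot_right : t (S q) < t (S (S q)).

Let jump (l : nat) : R := unit_vec q l - unit_vec (S q) l.

Lemma cox_de_boor_jump m j : cox_de_boor (S m) j jump (t (S q)) = 0.
Proof.
  revert j. induction m; intros j.
  - cbn [cox_de_boor]. unfold jump.
    replace (j + 1 + 1)%nat with (S (S j)) by lia. replace (j + 1)%nat with (S j) by lia.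
    destruct (Nat.eq_dec j q) as [->|n1]; [|destruct (Nat.eq_dec j (S q)) as [->|n2]].
    + rewrite !unit_vec_eq, (unit_vec_neq q (S q)), (unit_vec_neq (S q) q) by lia.
      unfold Rdiv. rewrite !Rinv_r by lra. ring.
    + rewrite Rminus_diag, (unit_vec_neq q (S (S q))), (unit_vec_neq (S q) (S (S q))) by lia.
      unfold Rdiv. ring.
    + rewrite (unit_vec_neq q j), (unit_vec_neq (S q) j) by lia.
      destruct (Nat.eq_dec (S j) q) as [<-|n3].
      * rewrite Rminus_diag. unfold Rdiv. ring.
      * rewrite (unit_vec_neq q (S j)), (unit_vec_neq (S q) (S j)) by lia. ring.
  - change (cox_de_boor (S (S m)) j jump (t (S q))) with
      ((t (S q) - t j) / (t (j + S (S m)) - t j) * cox_de_boor (S m) j jump (t (S q))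
       + (t (j + S (S m) + 1) - t (S q)) / (t (j + S (S m) + 1) - t (S j))
         * cox_de_boor (S m) (S j) jump (t (S q))).
    rewrite !IHm. ring.
Qed.

Lemma cox_de_boor_D_knot i m j : (i < m)%nat ->
  cox_de_boor_D i m j (unit_vec q) (t (S q)) = cox_de_boor_D i m j (unit_vec (S q)) (t (S q)).
Proof.
  intros hi. apply Rminus_diag_uniq. rewrite <- cox_de_boor_D_sub. fold jump.
  revert m j hi. induction i; intros m j hi; destruct m; try lia.
  - apply cox_de_boor_jump.
  - cbn [cox_de_boor_D]. rewrite !IHi by lia. unfold Rdiv. ring.
Qed.
End KnotJump.
End CoxDeBoor.

Section ExtendedKnots.
Variables (k g : nat) (lam : nat -> R).
Hypothesis lam_incr : forall i, (i <= g)%nat -> lam i < lam (S i).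

Local Notation t := (ext_knots k g lam).

Lemma lam_le p q : (p <= q)%nat -> (q <= S g)%nat -> lam p <= lam q.
Proof.
  intros hpq hq. induction q as [|q IH]; [replace p with O by lia; lra|].
  destruct (Nat.eq_dec p (S q)) as [->|ne]; [lra|].
  pose proof (lam_incr q ltac:(lia)). specialize (IH ltac:(lia) ltac:(lia)). lra.
Qed.

Lemma lam_lt p q : (p < q)%nat -> (q <= S g)%nat -> lam p < lam q.
Proof. intros. apply Rlt_le_trans with (lam (S p)); [apply lam_incr; lia | apply lam_le; lia]. Qed.

Lemma ext_knots_low j : (j <= k)%nat -> t j = lam O.
Proof. intros. unfold ext_knots. rewrite (proj2 (Nat.leb_le _ _) H). auto. Qed.

Lemma ext_knots_mid i : (i <= S g)%nat -> t (k + i) = lam i.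
Proof.
  intros. unfold ext_knots. destruct i.
  - rewrite Nat.add_0_r, Nat.leb_refl. auto.
  - rewrite (proj2 (Nat.leb_nle (k + S i) k)) by lia.
    replace (k + S i - k)%nat with (S i) by lia. rewrite (proj2 (Nat.leb_le _ _) H). auto.
Qed.

Lemma ext_knots_high j : (k + S g <= j)%nat -> t j = lam (S g).
Proof.
  intros. unfold ext_knots. rewrite (proj2 (Nat.leb_nle j k)) by lia.
  destruct (Nat.leb_spec (j - k) (S g)); auto. replace (j - k)%nat with (S g) by lia. auto.
Qed.

Lemma ext_knots_val j : t j = lam (Nat.min (j - k) (S g)).
Proof.
  destruct (Nat.le_gt_cases j k); [|destruct (Nat.le_gt_cases (j - k) (S g))].
  - rewrite ext_knots_low, Nat.min_l by lia. f_equal. lia.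
  - replace j with (k + (j - k))%nat at 1 by lia. rewrite ext_knots_mid, Nat.min_l by lia. auto.
  - rewrite ext_knots_high, Nat.min_r by lia. auto.
Qed.

Lemma ext_knots_mono i j : (i <= j)%nat -> t i <= t j.
Proof. intros. rewrite !ext_knots_val. apply lam_le; lia. Qed.

Lemma ext_knots_lt i j : (i < j)%nat -> (k < j)%nat -> (i <= k + g)%nat -> t i < t j.
Proof. intros. rewrite !ext_knots_val. apply lam_lt; lia. Qed.

Lemma ext_knots_bounds j : lam O <= t j <= lam (S g).
Proof. rewrite ext_knots_val. split; apply lam_le; lia. Qed.

Fixpoint knots_le (n : nat) (x : R) : nat :=
  match n with
  | O => O
  | S n' => (knots_le n' x + if Rle_dec (lam (S n')) x then 1 else 0)%nat
  end.

Fixpoint knots_lt (n : nat) (x : R) : nat :=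
  match n with
  | O => O
  | S n' => (knots_lt n' x + if Rlt_dec (lam (S n')) x then 1 else 0)%nat
  end.

(* The order-one values [B_l^1(x)] on [a, b], and their limits from the left. *)
Definition active (x : R) : nat -> R := unit_vec (k + knots_le g x).
Definition active_left (x : R) : nat -> R := unit_vec (k + knots_lt g x).

Lemma knots_locally n c : exists d, 0 < d /\
  (forall y, c <= y < c + d -> knots_le n y = knots_le n c) /\
  (forall y, c - d < y < c -> knots_le n y = knots_lt n c).
Proof.
  induction n.
  - exists 1. split; [lra|]. split; intros; auto.
  - destruct IHn as [d [hd [h1 h2]]].
    destruct (Rtotal_order (lam (S n)) c) as [o|[o|o]];
      [exists (Rmin d (c - lam (S n))) | exists d | exists (Rmin d (lam (S n) - c))];
      (split; [try apply Rmin_pos; lra|]);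
      pose proof (Rmin_l d (c - lam (S n))); pose proof (Rmin_r d (c - lam (S n)));
      pose proof (Rmin_l d (lam (S n) - c)); pose proof (Rmin_r d (lam (S n) - c));
      split; intros y hy; simpl; rewrite ?h1, ?h2 by lra; f_equal;
      repeat destruct Rle_dec; repeat destruct Rlt_dec; auto; lra.
Qed.

Lemma active_locally c : exists d, 0 < d /\
  (forall y, c <= y < c + d -> active y = active c) /\
  (forall y, c - d < y < c -> active y = active_left c).
Proof.
  destruct (knots_locally g c) as [d [hd [h1 h2]]]. exists d.
  unfold active, active_left. split; [auto|split; intros y hy; [rewrite h1|rewrite h2]; auto].
Qed.

Lemma knots_le_eq i x : (i <= g)%nat -> (i = O \/ lam i <= x) -> (i = g \/ x < lam (S i)) ->
  knots_le g x = i.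
Proof.
  intros hi h1 h2.
  enough (H : forall n, (n <= g)%nat -> knots_le n x = Nat.min n i) by (rewrite H; lia).
  induction n; intros hn; cbn [knots_le]; auto.
  rewrite IHn by lia. destruct (Rle_dec (lam (S n)) x) as [r|r].
  - destruct (Nat.le_gt_cases (S n) i); [lia|].
    destruct h2 as [h2|h2]; [lia|]. pose proof (lam_le (S i) (S n) ltac:(lia) ltac:(lia)). lra.
  - destruct (Nat.le_gt_cases (S n) i); [|lia].
    destruct h1 as [h1|h1]; [lia|]. pose proof (lam_le (S n) i ltac:(lia) ltac:(lia)). lra.
Qed.

Lemma knots_lt_eq i x : (i <= g)%nat -> (i = O \/ lam i < x) -> (i = g \/ x <= lam (S i)) ->
  knots_lt g x = i.
Proof.
  intros hi h1 h2.
  enough (H : forall n, (n <= g)%nat -> knots_lt n x = Nat.min n i) by (rewrite H; lia).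
  induction n; intros hn; cbn [knots_lt]; auto.
  rewrite IHn by lia. destruct (Rlt_dec (lam (S n)) x) as [r|r].
  - destruct (Nat.le_gt_cases (S n) i); [lia|].
    destruct h2 as [h2|h2]; [lia|]. pose proof (lam_le (S i) (S n) ltac:(lia) ltac:(lia)). lra.
  - destruct (Nat.le_gt_cases (S n) i); [|lia].
    destruct h1 as [h1|h1]; [lia|]. pose proof (lam_le (S n) i ltac:(lia) ltac:(lia)). lra.
Qed.

Lemma knots_le_bound n x : (knots_le n x <= n)%nat.
Proof. induction n; cbn [knots_le]; auto. destruct Rle_dec; lia. Qed.

Lemma knot_interval x : exists i, (i <= g)%nat /\ (i = O \/ lam i <= x) /\ (i = g \/ x < lam (S i)).
Proof.
  enough (H : forall n, (n <= g)%nat ->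
            exists i, (i <= n)%nat /\ (i = O \/ lam i <= x) /\ (i = n \/ x < lam (S i))).
  { destruct (H g (le_n g)) as [i [h1 h2]]. exists i. auto. }
  induction n; intros hn; [exists O; auto|].
  destruct IHn as [i [h1 [h2 [->|h3]]]]; [lia| |].
  - destruct (Rle_dec (lam (S n)) x); [exists (S n); auto|].
    exists n. split; [lia|]. split; [auto|right; lra].
  - exists i. split; [lia|auto].
Qed.

Lemma knots_jump c : knots_lt g c = knots_le g c \/
  exists i, (1 <= i <= g)%nat /\ c = lam i /\ knots_le g c = i /\ knots_lt g c = pred i.
Proof.
  destruct (knot_interval c) as [i [h1 [h2 h3]]].
  rewrite (knots_le_eq i c) by auto.
  assert (h3' : i = g \/ c <= lam (S i)) by (destruct h3; [left|right]; auto; lra).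
  destruct h2 as [->|h2]; [left; apply knots_lt_eq; auto|].
  destruct (Rle_lt_or_eq_dec _ _ h2) as [r|r]; [left; apply knots_lt_eq; auto|].
  destruct i as [|i]; [left; apply knots_lt_eq; auto|].
  right. exists (S i). repeat split; auto; try lia.
  apply knots_lt_eq; [lia| |right; simpl; lra].
  destruct i; [left; auto|right]. rewrite <- r. apply lam_incr. lia.
Qed.

Lemma B1_active_lt x : lam O <= x < lam (S g) -> forall l, Defs.B1 t (lam (S g)) l x = active x l.
Proof.
  intros hx l. destruct (knot_interval x) as [i [hi [h1 h2]]].
  assert (hix : lam i <= x) by (destruct h1 as [->|h1]; lra).
  assert (hxi : x < lam (S i)) by (destruct h2 as [->|h2]; lra).
  unfold active. rewrite (knots_le_eq i x) by auto.
  unfold Defs.B1. destruct (Req_EM_T x (lam (S g))) as [e|_]; [lra|].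
  destruct (Nat.eq_dec l (k + i)) as [->|ne].
  - rewrite unit_vec_eq, ext_knots_mid by lia. replace (S (k + i)) with (k + S i)%nat by lia.
    rewrite ext_knots_mid by lia. destruct Rle_dec; [|lra]. destruct Rlt_dec; [auto|lra].
  - rewrite unit_vec_neq by auto.
    destruct (Rle_dec (t l) x) as [r1|r1]; auto. destruct (Rlt_dec x (t (S l))) as [r2|r2]; auto.
    exfalso. destruct (Nat.lt_ge_cases l (k + i)).
    + pose proof (ext_knots_mono (S l) (k + i) ltac:(lia)). rewrite ext_knots_mid in * by lia. lra.
    + pose proof (ext_knots_mono (k + S i) l ltac:(lia)). rewrite ext_knots_mid in * by lia. lra.
Qed.

Lemma B1_active_b l : Defs.B1 t (lam (S g)) l (lam (S g)) = active (lam (S g)) l.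
Proof.
  unfold active. rewrite (knots_le_eq g) by (auto; right; apply lam_le; lia).
  pose proof (ext_knots_bounds l) as [_ hl]. pose proof (ext_knots_bounds (S l)) as [_ hSl].
  unfold Defs.B1. destruct (Rle_dec (t l) (lam (S g))) as [_|]; [|lra].
  destruct (Rlt_dec (lam (S g)) (t (S l))) as [|_]; [lra|].
  destruct (Req_EM_T (lam (S g)) (lam (S g))) as [_|]; [|lra].
  destruct (Nat.eq_dec l (k + g)) as [->|ne].
  - rewrite unit_vec_eq, ext_knots_high by lia.
    destruct (Req_EM_T _ _) as [_|]; [|lra]. destruct Rlt_dec as [|n]; auto.
    exfalso. apply n. rewrite ext_knots_mid by lia. apply lam_incr. lia.
  - rewrite unit_vec_neq by auto.
    destruct (Req_EM_T (t (S l)) (lam (S g))) as [e|]; auto.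
    destruct (Rlt_dec (t l) (t (S l))) as [r|]; auto. exfalso.
    destruct (Nat.le_gt_cases l (k + g)).
    + pose proof (ext_knots_lt (S l) (k + S g) ltac:(lia) ltac:(lia) ltac:(lia)).
      rewrite ext_knots_mid in * by lia. lra.
    + rewrite ext_knots_high in r by lia. lra.
Qed.

Lemma bsp_active m j x : lam O <= x <= lam (S g) ->
  Defs.bsp t (lam (S g)) m j x = cox_de_boor t m j (active x) x.
Proof.
  intros hx. rewrite bsp_cox_de_boor. apply cox_de_boor_ext. intros l.
  destruct (Req_dec x (lam (S g))) as [->|ne]; [apply B1_active_b|apply B1_active_lt; lra].
Qed.

Lemma null_on_empty_spans_unit_vec p : (k <= p <= k + g)%nat ->
  null_on_empty_spans t (unit_vec p).
Proof.
  intros hp l e. apply unit_vec_neq. intros ->.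
  pose proof (ext_knots_lt p (S p) ltac:(lia) ltac:(lia) ltac:(lia)). lra.
Qed.

Lemma null_on_empty_spans_active x : null_on_empty_spans t (active x).
Proof. apply null_on_empty_spans_unit_vec. pose proof (knots_le_bound g x). lia. Qed.

Lemma cox_de_boor_D_active_left c i m j : (i < m)%nat ->
  cox_de_boor_D t i m j (active_left c) c = cox_de_boor_D t i m j (active c) c.
Proof.
  intros hi. unfold active_left, active.
  destruct (knots_jump c) as [->|[p [hp [-> [-> ->]]]]]; [reflexivity|].
  set (q := (k + pred p)%nat).
  replace (k + p)%nat with (S q) by (unfold q; lia).
  replace (lam p) with (t (S q))
    by (unfold q; replace (S (k + pred p)) with (k + p)%nat by lia; apply ext_knots_mid; lia).
  apply cox_de_boor_D_knot; [apply ext_knots_lt; unfold q; lia .. | exact hi].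
Qed.

Lemma active_a : active (lam O) = unit_vec k.
Proof.
  unfold active. rewrite (knots_le_eq O), Nat.add_0_r; auto; [lia|].
  destruct (Nat.eq_dec g O); [left; auto|right; apply lam_incr; lia].
Qed.

Lemma active_b : active (lam (S g)) = unit_vec (k + g).
Proof. unfold active. rewrite (knots_le_eq g); auto. right. apply lam_le; lia. Qed.

Lemma cox_de_boor_at_a m j : cox_de_boor t m j (unit_vec k) (lam O) = if Nat.eqb (j + m) k then 1 else 0.
Proof.
  revert j. induction m; intros j; cbn [cox_de_boor].
  - rewrite Nat.add_0_r. reflexivity.
  - rewrite !IHm.
    destruct (Nat.eqb_spec (j + m) k); destruct (Nat.eqb_spec (S j + m) k);
      destruct (Nat.eqb_spec (j + S m) k); try lia.
    + rewrite (ext_knots_low j), Rminus_diag by lia. unfold Rdiv. ring.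
    + rewrite (ext_knots_low (S j)) by lia. replace (j + S m + 1)%nat with (k + 1)%nat by lia.
      rewrite ext_knots_mid by lia. pose proof (lam_incr O ltac:(lia)).
      unfold Rdiv. rewrite Rinv_r by lra. ring.
    + ring.
Qed.

Lemma cox_de_boor_at_b m j :
  cox_de_boor t m j (unit_vec (k + g)) (lam (S g)) = unit_vec (k + g) j.
Proof.
  revert j. induction m; intros j; cbn [cox_de_boor]; auto. rewrite !IHm.
  destruct (Nat.eq_dec j (k + g)) as [->|ne].
  - rewrite unit_vec_eq, (unit_vec_neq (k + g) (S (k + g))), ext_knots_mid,
      (ext_knots_high (k + g + S m)) by lia.
    pose proof (lam_incr g ltac:(lia)). unfold Rdiv. rewrite Rinv_r by lra. ring.
  - rewrite (unit_vec_neq _ j) by auto.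
    destruct (Nat.eq_dec (S j) (k + g)) as [e|ne'].
    + rewrite <- e, (ext_knots_high (j + S m + 1)), Rminus_diag by lia. unfold Rdiv. ring.
    + rewrite unit_vec_neq by auto. ring.
Qed.

Definition off_knots (x : R) : Prop := exists i, (i <= g)%nat /\ lam i < x < lam (S i).

Lemma off_knots_bounds x : off_knots x -> lam O <= x <= lam (S g).
Proof.
  intros [i [hi hx]]. pose proof (lam_le O i ltac:(lia) ltac:(lia)).
  pose proof (lam_le (S i) (S g) ltac:(lia) ltac:(lia)). lra.
Qed.

Lemma active_piece i x : (i <= g)%nat -> lam i < x < lam (S i) -> active x = unit_vec (k + i).
Proof. intros hi hx. unfold active. rewrite (knots_le_eq i x); auto; right; lra. Qed.

Lemma off_knots_near x : off_knots x -> exists d, 0 < d /\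
  forall y, Rabs (y - x) < d -> off_knots y /\ active y = active x.
Proof.
  intros [i [hi hx]]. exists (Rmin (x - lam i) (lam (S i) - x)).
  pose proof (Rmin_l (x - lam i) (lam (S i) - x)). pose proof (Rmin_r (x - lam i) (lam (S i) - x)).
  split; [apply Rmin_pos; lra|]. intros y hy. apply Rabs_def2 in hy.
  assert (hy' : lam i < y < lam (S i)) by lra.
  split; [exists i; auto|]. rewrite !(active_piece i); auto.
Qed.

Lemma is_derive_eq0_off_knots (f : R -> R) x l : off_knots x ->
  (forall y, off_knots y -> f y = 0) -> is_derive f x l -> l = 0.
Proof.
  intros hx hf. destruct (off_knots_near x hx) as [d [hd H]].
  apply (is_derive_eq_loc0 f x l d hd). intros y hy. apply hf, H, hy.
Qed.

(** * B-splines on the extended knots *)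

Local Notation B m l := (Defs.bsp t (lam (S g)) m l).

Lemma is_derive_bsp m j x : off_knots x ->
  is_derive (B (S m) j) x
    (INR (S m) * (B m j x / (t (j + S m) - t j) - B m (S j) x / (t (S j + S m) - t (S j)))).
Proof.
  intros hx. destruct (off_knots_near x hx) as [d [hd H]].
  pose proof (off_knots_bounds x hx) as hab.
  apply (is_derive_ext_radius (cox_de_boor t (S m) j (active x)) _ x _ d hd).
  - intros y hy. destruct (H y hy) as [hy1 <-]. rewrite bsp_active; auto using off_knots_bounds.
  - rewrite !bsp_active by auto. replace (S j + S m)%nat with (j + S m + 1)%nat by lia.
    apply is_derive_cox_de_boor, ext_knots_mono.
Qed.

Lemma bsp_eq0_high m x : lam O <= x <= lam (S g) -> B m (S (k + g)) x = 0.
Proof.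
  intros hx. rewrite bsp_active by auto. apply cox_de_boor_eq0_from. intros l hl.
  apply unit_vec_neq. pose proof (knots_le_bound g x). lia.
Qed.

Lemma bsp_empty_span m l x : lam O <= x <= lam (S g) -> t l = t (l + S m) -> B m l x = 0.
Proof.
  intros hx hl. rewrite bsp_active by auto.
  apply cox_de_boor_empty_span; auto using ext_knots_mono, null_on_empty_spans_active.
Qed.

Lemma bsp_eq0_low m l x : lam O <= x <= lam (S g) -> (l + S m <= k)%nat -> B m l x = 0.
Proof. intros hx hl. apply bsp_empty_span; auto. rewrite !ext_knots_low by lia. auto. Qed.

Lemma sumR_bsp m x : (m <= k)%nat -> lam O <= x <= lam (S g) ->
  sumR (S (k + g)) (fun l => B m l x) = 1.
Proof.
  intros hm hx. rewrite (sumR_ext _ _ (fun l => cox_de_boor t m l (active x) x))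
    by (intros; apply bsp_active; auto).
  induction m.
  - unfold active. simpl cox_de_boor. rewrite <- (sumR_unit_vec (S (k + g)) (fun _ => 1) (k + knots_le g x)).
    + apply sumR_ext. intros; ring.
    + pose proof (knots_le_bound g x). lia.
  - rewrite sumR_cox_de_boor_S; auto using ext_knots_mono, null_on_empty_spans_active with arith.
    + apply cox_de_boor_empty_span; auto using ext_knots_mono, null_on_empty_spans_active.
      rewrite !ext_knots_low by lia. auto.
    + apply cox_de_boor_eq0_from. intros l hl. apply unit_vec_neq.
      pose proof (knots_le_bound g x). lia.
Qed.

Definition bsp_glued (m j : nat) : R -> R := glued active (fun i v => cox_de_boor_D t i m j v).

Lemma bsp_glued_eq m j x : lam O <= x <= lam (S g) -> bsp_glued m j x = B m j x.
Proof. intros hx. unfold bsp_glued, glued. simpl. rewrite bsp_active; auto. Qed.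

Lemma Derive_n_bsp_glued m j i x : (i < m)%nat ->
  Derive_n (bsp_glued m j) i x = cox_de_boor_D t i m j (active x) x.
Proof.
  apply (Derive_n_glued active active_left m (fun i v => cox_de_boor_D t i m j v));
    [exact active_locally| |].
  - intros; apply is_derive_cox_de_boor_D, ext_knots_mono.
  - intros; apply cox_de_boor_D_active_left; auto.
Qed.

Lemma ex_derive_Derive_n_bsp_glued m j i x : (S i < m)%nat ->
  ex_derive (Derive_n (bsp_glued m j) i) x.
Proof.
  apply (ex_derive_Derive_n_glued active active_left m (fun i v => cox_de_boor_D t i m j v));
    [exact active_locally| |].
  - intros; apply is_derive_cox_de_boor_D, ext_knots_mono.
  - intros; apply cox_de_boor_D_active_left; auto.
Qed.

Lemma continuous_Derive_n_bsp_glued m j i x : (i < m)%nat ->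
  continuous (Derive_n (bsp_glued m j) i) x.
Proof.
  apply (continuous_Derive_n_glued active active_left m (fun i v => cox_de_boor_D t i m j v));
    [exact active_locally| |].
  - intros; apply is_derive_cox_de_boor_D, ext_knots_mono.
  - intros; apply cox_de_boor_D_active_left; auto.
Qed.

Definition extends_continuously (s : R -> R) : Prop :=
  exists G : R -> R, (forall x, continuous G x) /\ forall x, lam O <= x <= lam (S g) -> G x = s x.

Lemma extends_continuously_bsp_comb m d : (1 <= m)%nat ->
  extends_continuously (fun y => sumR (S (k + g)) (fun l => d l * B m l y)).
Proof.
  intros hm. exists (fun y => sumR (S (k + g)) (fun l => d l * bsp_glued m l y)). split.
  - intros x. apply continuous_sumR. intros l _.
    apply (continuous_scal_r (d l) (bsp_glued m l)), (continuous_Derive_n_bsp_glued m l O x hm).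
  - intros x hx. apply sumR_ext. intros l _. rewrite bsp_glued_eq; auto.
Qed.

Lemma is_derive_sumR_bsp m d x : off_knots x ->
  is_derive (fun y => sumR (S (k + g)) (fun l => d l * B (S m) l y)) x
    (sumR (S (k + g)) (fun l => (d l - lag d l) * (INR (S m) / (t (l + S m) - t l) * B m l x))).
Proof.
  intros hx. eapply is_derive_val.
  { apply (is_derive_sumR _ (fun l y => d l * B (S m) l y)). intros l hl.
    apply is_derive_scal, is_derive_bsp, hx. }
  set (u := fun l => INR (S m) / (t (l + S m) - t l) * B m l x).
  rewrite (sumR_ext _ _ (fun l => d l * (u l - u (S l)))).
  - rewrite sumR_by_parts. unfold u.
    rewrite bsp_eq0_high by (apply off_knots_bounds; auto). unfold Rdiv. ring.
  - intros l hl. unfold u, Rdiv. ring.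
Qed.

Lemma bsp_independent m d : (m <= k)%nat ->
  (forall x, off_knots x -> sumR (S (k + g)) (fun l => d l * B m l x) = 0) ->
  forall l, (k - m <= l < S (k + g))%nat -> d l = 0.
Proof.
  revert d. induction m; intros d hm H l hl.
  - set (i := (l - k)%nat). set (x := (lam i + lam (S i)) / 2).
    assert (hi : (i <= g)%nat) by (unfold i; lia).
    assert (hx : lam i < x < lam (S i)) by (unfold x; pose proof (lam_incr i hi); lra).
    specialize (H x ltac:(exists i; auto)).
    rewrite (sumR_ext _ _ (fun l' => d l' * unit_vec l l')), sumR_unit_vec in H; [exact H|lia|].
    intros l' _. rewrite bsp_active by (apply off_knots_bounds; exists i; auto).
    simpl. rewrite (active_piece i); auto. replace (k + i)%nat with l by (unfold i; lia). auto.
  - remember (k - S m)%nat as p eqn:hp.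
    assert (Hd : forall x, off_knots x -> sumR (S (k + g))
              (fun l => ((d l - lag d l) * (INR (S m) / (t (l + S m) - t l))) * B m l x) = 0).
    { intros x hx. rewrite <- (is_derive_eq0_off_knots _ x _ hx H (is_derive_sumR_bsp m d x hx)).
      apply sumR_ext. intros; ring. }
    assert (Hlag : forall l, (p < l < S (k + g))%nat -> d l = lag d l).
    { intros l' hl'. specialize (IHm _ ltac:(lia) Hd l' ltac:(lia)).
      pose proof (ext_knots_lt l' (l' + S m) ltac:(lia) ltac:(lia) ltac:(lia)).
      pose proof (pos_INR m). rewrite S_INR in IHm. unfold Rdiv in IHm.
      apply Rmult_integral in IHm as [E|E]; [lra|].
      apply Rmult_integral in E as [E|E]; [lra|]. apply Rinv_neq_0_compat in E; lra. }
    assert (Hp : d p = 0).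
    { set (x := (lam O + lam 1%nat) / 2).
      assert (hx : off_knots x) by (exists O; unfold x; pose proof (lam_incr O ltac:(lia)); split; [lia|lra]).
      specialize (H x hx). rewrite <- H, <- (Rmult_1_r (d p)), <- (sumR_bsp (S m) x hm), <- sumR_scal
        by (apply off_knots_bounds, hx).
      apply sumR_ext. intros l' hl'. destruct (Nat.lt_ge_cases l' p).
      - rewrite bsp_eq0_low by (try apply off_knots_bounds; auto; lia). ring.
      - rewrite (lag_stationary d p (S (k + g)) Hlag l'); auto. }
    rewrite (lag_stationary d p (S (k + g)) Hlag l); [exact Hp|lia].
Qed.

Lemma continuous_derive0_const (G : R -> R) : (forall x, continuous G x) ->
  (forall x, off_knots x -> is_derive G x 0) ->
  forall x, lam O <= x <= lam (S g) -> G x = G (lam O).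
Proof.
  intros hc hd.
  assert (Hpiece : forall i, (i <= g)%nat -> forall x, lam i <= x <= lam (S i) -> G x = G (lam i)).
  { intros i hi x hx. destruct (MVT_gen G (lam i) x (fun _ => 0)) as [c [_ hcc]].
    - rewrite Rmin_left, Rmax_right by lra. intros y hy. apply hd. exists i. split; [auto|lra].
    - intros y _. apply continuity_pt_filterlim, hc.
    - lra. }
  assert (Hknot : forall i, (i <= S g)%nat -> G (lam i) = G (lam O)).
  { induction i; intros hi; auto. rewrite <- IHi by lia. apply Hpiece; [lia|].
    pose proof (lam_incr i ltac:(lia)). lra. }
  intros x hx. destruct (knot_interval x) as [i [h1 [h2 h3]]].
  rewrite (Hpiece i h1 x); [apply Hknot; lia|].
  split; [destruct h2 as [->|h2]; lra | destruct h3 as [->|h3]; lra].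
Qed.

Fixpoint spline_like (m : nat) (s : R -> R) : Prop :=
  match m with
  | O => forall i, (i <= g)%nat -> exists c, forall x, lam i < x < lam (S i) -> s x = c
  | S m' => extends_continuously s /\
            exists s', spline_like m' s' /\ forall x, off_knots x -> is_derive s x (s' x)
  end.

Lemma bsp_span_0 s : spline_like 0 s ->
  exists d, forall x, off_knots x -> s x = sumR (S (k + g)) (fun l => d l * B 0 l x).
Proof.
  intros hs. destruct (finite_choice (fun i c => forall x, lam i < x < lam (S i) -> s x = c) g hs)
    as [c hc].
  exists (fun l => c (l - k)%nat). intros x [i [hi hx]].
  rewrite (sumR_ext _ _ (fun l => c (l - k)%nat * unit_vec (k + i) l)).
  - rewrite sumR_unit_vec by lia. replace (k + i - k)%nat with i by lia. auto.
  - intros l _. rewrite bsp_active by (apply off_knots_bounds; exists i; auto).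
    simpl. rewrite (active_piece i); auto.
Qed.

Lemma bsp_span_step m s s' e : (S m <= k)%nat -> extends_continuously s ->
  (forall x, off_knots x -> is_derive s x (s' x)) ->
  (forall x, off_knots x -> s' x = sumR (S (k + g)) (fun l => e l * B m l x)) ->
  exists d, forall x, lam O <= x <= lam (S g) ->
    s x = sumR (S (k + g)) (fun l => d l * B (S m) l x).
Proof.
  intros hm [Gs [hGs eGs]] hder he.
  set (d := fun l => sumR (S l) (fun l' => e l' * (t (l' + S m) - t l') / INR (S m))).
  destruct (extends_continuously_bsp_comb (S m) d ltac:(lia)) as [Gb [hGb eGb]].
  set (G := fun y => Gs y - Gb y).
  assert (hG0 : forall x, off_knots x -> is_derive G x 0).
  { intros x hx. destruct (off_knots_near x hx) as [r [hr Hr]].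
    apply (is_derive_ext_radius (fun y => s y - sumR (S (k + g)) (fun l => d l * B (S m) l y))
             G x 0 r hr).
    { intros y hy. unfold G. rewrite eGs, eGb; auto; apply off_knots_bounds, Hr, hy. }
    eapply is_derive_val.
    { apply (is_derive_minus s (fun y => sumR (S (k + g)) (fun l => d l * B (S m) l y)));
        [apply hder | apply is_derive_sumR_bsp]; exact hx. }
    apply Rminus_diag_eq. rewrite he by exact hx. apply sumR_ext. intros l _.
    replace (d l - lag d l) with (e l * (t (l + S m) - t l) / INR (S m))
      by (unfold d; destruct l; cbn [lag sumR]; ring).
    pose proof (pos_INR m). rewrite S_INR.
    destruct (Req_dec (t l) (t (l + S m))) as [z|z].
    - rewrite bsp_empty_span by (auto; apply off_knots_bounds, hx). ring.
    - pose proof (ext_knots_mono l (l + S m) ltac:(lia)). field. lra. }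
  assert (hG : forall x, lam O <= x <= lam (S g) -> G x = G (lam O)).
  { apply continuous_derive0_const; auto. intros x. apply (continuous_minus Gs Gb); auto. }
  exists (fun l => d l + G (lam O)). intros x hx.
  rewrite (sumR_ext _ _ (fun l => d l * B (S m) l x + G (lam O) * B (S m) l x)) by (intros; ring).
  rewrite sumR_plus, sumR_scal, sumR_bsp by (auto; lia).
  rewrite <- (hG x hx), <- (eGs x hx), <- (eGb x hx).
  unfold G. ring.
Qed.

Lemma bsp_span m s : (m < k)%nat -> spline_like (S m) s ->
  exists d, forall x, lam O <= x <= lam (S g) ->
    s x = sumR (S (k + g)) (fun l => d l * B (S m) l x).
Proof.
  revert s. induction m; intros s hm [hs [s' [hs' hder]]].
  - destruct (bsp_span_0 s' hs') as [e he]. apply (bsp_span_step 0 s s' e); auto.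
  - destruct (IHm s' ltac:(lia) hs') as [e he]. apply (bsp_span_step (S m) s s' e); auto.
    intros x hx. apply he, off_knots_bounds, hx.
Qed.

Lemma spline_like_Derive_n (F : R -> R) :
  (forall j, (j < k - 1)%nat -> forall x, ex_derive (Derive_n F j) x) ->
  (forall x, continuous (Derive_n F (k - 1)) x) ->
  (forall i, (i <= g)%nat -> exists p, is_poly k p /\ forall x, lam i <= x <= lam (S i) -> F x = p x) ->
  forall m, (m <= k)%nat -> spline_like m (Derive_n F (k - m)).
Proof.
  intros hd hc hp. induction m; intros hm.
  - intros i hi. destruct (hp i hi) as [p [pp ep]].
    pose proof (is_poly_Derive_n k p k pp) as P0. rewrite Nat.sub_diag in P0.
    destruct P0 as [c hc'].
    exists c. intros x hx. rewrite Nat.sub_0_r, <- (hc' x).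
    destruct (Derive_n_ext_interval F p (lam i) (lam (S i)) x hx ep) as [r hr].
    apply hr, ball_center.
  - split; [|exists (Derive_n F (k - m)); split; [apply IHm; lia|]].
    + exists (Derive_n F (k - S m)). split; auto. intros x.
      destruct (Nat.lt_ge_cases (k - S m) (k - 1)).
      * apply (ex_derive_continuous (Derive_n F (k - S m)) x), hd, H.
      * replace (k - S m)%nat with (k - 1)%nat by lia. auto.
    + intros x [i [hi hx]]. destruct (hp i hi) as [p [pp ep]].
      replace (k - m)%nat with (S (k - S m)) by lia. apply Derive_correct.
      apply (ex_derive_ext_loc (Derive_n p (k - S m))).
      * eapply filter_imp; [|exact (Derive_n_ext_interval F p _ _ x hx ep)].
        intros y hy. symmetry; apply hy.
      * apply (is_poly_ex_derive (k - (k - S m))), is_poly_Derive_n, pp.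
Qed.

(** * The functions [Z_j] *)

Hypothesis k_pos : (1 <= k)%nat.

Lemma ext_knots_span_pos l : (l <= k + g)%nat -> 0 < t (l + S k) - t l.
Proof. intros hl. pose proof (ext_knots_lt l (l + S k) ltac:(lia) ltac:(lia) hl). lra. Qed.

(* The Curry--Schoenberg normalization of [B_l^{k+1}]: its integral over [[a, b]] is one. *)
Definition mspline (l : nat) (x : R) : R := INR (S k) / (t (l + S k) - t l) * B k l x.

Lemma bsp_mspline l x : (l <= k + g)%nat -> B k l x = (t (l + S k) - t l) / INR (S k) * mspline l x.
Proof.
  intros hl. pose proof (ext_knots_span_pos l hl). pose proof (pos_INR k).
  unfold mspline. rewrite S_INR. field. lra.
Qed.

Lemma Zfun_mspline j x : Zfun k g lam j x = mspline j x - mspline (S j) x.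
Proof.
  unfold Zfun, mspline. cbv zeta.
  replace (j + k + 1)%nat with (j + S k)%nat by lia. replace (j + k + 2)%nat with (S j + S k)%nat by lia.
  unfold Rdiv. ring.
Qed.

Lemma Zfun_Derive_bsp_glued j x : lam O <= x <= lam (S g) ->
  Zfun k g lam j x = Derive_n (bsp_glued (S k) j) 1 x.
Proof.
  intros hx. rewrite Derive_n_bsp_glued by lia. unfold Zfun. cbv zeta. cbn [cox_de_boor_D].
  rewrite !bsp_active by auto.
  replace (j + k + 1)%nat with (j + S k)%nat by lia. replace (j + k + 2)%nat with (j + S k + 1)%nat by lia.
  reflexivity.
Qed.

Lemma is_RInt_Zfun j : is_RInt (Zfun k g lam j) (lam O) (lam (S g)) (unit_vec (k + g) j).
Proof.
  set (W := bsp_glued (S k) j).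
  assert (hab : lam O <= lam (S g)) by (apply lam_le; lia).
  pose proof (is_RInt_derive W (Derive_n W 1) (lam O) (lam (S g))) as H.
  rewrite Rmin_left, Rmax_right in H by exact hab.
  assert (Wb : W (lam (S g)) = unit_vec (k + g) j).
  { unfold W. rewrite bsp_glued_eq, bsp_active, active_b by lra. apply cox_de_boor_at_b. }
  assert (Wa : W (lam O) = 0).
  { unfold W. rewrite bsp_glued_eq, bsp_active, active_a, cox_de_boor_at_a by lra.
    destruct (Nat.eqb_spec (j + S k) k); [lia|auto]. }
  rewrite Wb, Wa in H. change (minus (unit_vec (k + g) j) 0) with (unit_vec (k + g) j - 0) in H.
  rewrite Rminus_0_r in H.
  apply (is_RInt_ext (Derive_n W 1)).
  - intros x hx. rewrite Rmin_left, Rmax_right in hx by exact hab.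
    symmetry. apply Zfun_Derive_bsp_glued. lra.
  - apply H.
    + intros x _. apply Derive_correct, (ex_derive_Derive_n_bsp_glued (S k) j 0). lia.
    + intros x _. apply continuous_Derive_n_bsp_glued. lia.
Qed.

Lemma cox_de_boor_D_active_piece i n m l x : (i <= g)%nat -> lam i <= x <= lam (S i) ->
  (n < m)%nat -> cox_de_boor_D t n m l (active x) x = cox_de_boor_D t n m l (unit_vec (k + i)) x.
Proof.
  intros hi hx hn.
  destruct (Req_dec x (lam (S i))) as [e|ne]; [destruct (Nat.eq_dec i g) as [->|ng]|].
  - unfold active. rewrite (knots_le_eq g x); auto. right; lra.
  - rewrite <- cox_de_boor_D_active_left by exact hn. unfold active_left.
    rewrite (knots_lt_eq i x); auto; right; [rewrite e; apply lam_incr, hi | lra].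
  - unfold active. rewrite (knots_le_eq i x); auto; right; lra.
Qed.

Lemma Zfun_spline j : spline_space k g lam (Zfun k g lam j).
Proof.
  set (W := bsp_glued (S k) j). split.
  - intros i hi.
    assert (P : is_poly k (cox_de_boor_D t 1 (S k) j (unit_vec (k + i)))).
    { apply (is_poly_ext _ (Derive (cox_de_boor t (S k) j (unit_vec (k + i))))).
      - apply (is_poly_Derive (S k)), is_poly_cox_de_boor.
      - intros x. apply is_derive_unique, is_derive_cox_de_boor, ext_knots_mono. }
    destruct (proj1 (is_poly_monomials k _) P) as [c hc]. exists c. intros x hx.
    pose proof (lam_le O i ltac:(lia) ltac:(lia)). pose proof (lam_le (S i) (S g) ltac:(lia) ltac:(lia)).
    rewrite <- hc, Zfun_Derive_bsp_glued, Derive_n_bsp_glued by (auto; lra || lia).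
    apply cox_de_boor_D_active_piece; auto. lia.
  - exists (Derive_n W 1). split; [|split].
    + intros x hx. symmetry. apply Zfun_Derive_bsp_glued, hx.
    + intros i hi x. apply (ex_derive_ext (Derive_n W (i + 1))).
      * intros y. symmetry. apply Derive_n_comp.
      * apply ex_derive_Derive_n_bsp_glued. lia.
    + intros x. apply (continuous_ext (Derive_n W (k - 1 + 1))).
      * intros y. symmetry. apply Derive_n_comp.
      * apply continuous_Derive_n_bsp_glued. lia.
Qed.

Lemma Zfun_in_Zspace j : (j < g + k)%nat -> Zspace k g lam (Zfun k g lam j).
Proof.
  intros hj. split; [apply Zfun_spline|].
  pose proof (is_RInt_Zfun j) as H. rewrite unit_vec_neq in H by lia. exact H.
Qed.

Lemma eq0_of_mul_span_ratio r m l : (k < l + S m)%nat -> (l <= k + g)%nat ->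
  r * (INR (S m) / (t (l + S m) - t l)) = 0 -> r = 0.
Proof.
  intros h1 h2 E. pose proof (ext_knots_lt l (l + S m) ltac:(lia) h1 h2). pose proof (pos_INR m).
  rewrite S_INR in E. unfold Rdiv in E.
  apply Rmult_integral in E as [E|E]; [exact E|].
  apply Rmult_integral in E as [E|E]; [lra|]. apply Rinv_neq_0_compat in E; lra.
Qed.

Lemma sumR_Zfun_by_parts c n x :
  sumR n (fun j => c j * Zfun k g lam j x) =
  sumR n (fun l => (c l - lag c l) * mspline l x) - lag c n * mspline n x.
Proof. rewrite <- sumR_by_parts. apply sumR_ext. intros. rewrite Zfun_mspline. auto. Qed.

Lemma Zfun_independent c :
  (forall x, lam O <= x <= lam (S g) -> sumR (g + k) (fun j => c j * Zfun k g lam j x) = 0) ->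
  forall j, (j < g + k)%nat -> c j = 0.
Proof.
  intros H.
  set (c' := fun l => if Nat.ltb l (g + k) then c l else 0).
  assert (hc' : forall l, (l < g + k)%nat -> c' l = c l)
    by (intros; unfold c'; rewrite (proj2 (Nat.ltb_lt _ _)) by lia; auto).
  assert (hlast : c' (k + g)%nat = 0) by (unfold c'; rewrite (proj2 (Nat.ltb_ge _ _)) by lia; auto).
  assert (Hd : forall x, off_knots x -> sumR (S (k + g))
            (fun l => ((c' l - lag c' l) * (INR (S k) / (t (l + S k) - t l))) * B k l x) = 0).
  { intros x hx. rewrite <- (H x (off_knots_bounds x hx)).
    transitivity (sumR (S (k + g)) (fun j => c' j * Zfun k g lam j x)).
    - rewrite sumR_Zfun_by_parts. cbn [lag]. rewrite hlast, Rmult_0_l, Rminus_0_r.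
      apply sumR_ext. intros. unfold mspline. ring.
    - cbn [sumR]. rewrite hlast, Rmult_0_l, Rplus_0_r, Nat.add_comm.
      apply sumR_ext. intros. rewrite hc'; auto. }
  assert (Hlag : forall l, (l < S (k + g))%nat -> c' l = lag c' l).
  { intros l hl. apply Rminus_diag_uniq, (eq0_of_mul_span_ratio _ k l); try lia.
    apply (bsp_independent k _ (le_n k) Hd l). lia. }
  intros j hj. rewrite <- hc' by exact hj.
  rewrite (lag_stationary c' 0 (S (k + g))); [apply Hlag | intros; apply Hlag | ]; lia.
Qed.

Lemma is_RInt_mspline_last : is_RInt (mspline (k + g)) (lam O) (lam (S g)) 1.
Proof.
  pose proof (is_RInt_Zfun (k + g)) as H. rewrite unit_vec_eq in H.
  apply (is_RInt_ext (Zfun k g lam (k + g))); [|exact H].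
  intros x _. rewrite Zfun_mspline. unfold mspline.
  rewrite (ext_knots_high (S (k + g) + S k)), (ext_knots_high (S (k + g))), Rminus_diag, Rdiv_0_r
    by lia.
  rewrite Rmult_0_l, Rminus_0_r. reflexivity.
Qed.

Lemma sumR_Zfun_partial_sums e x :
  sumR (g + k) (fun j => sumR (S j) e * Zfun k g lam j x)
  = sumR (S (k + g)) (fun l => e l * mspline l x) - sumR (S (k + g)) e * mspline (k + g) x.
Proof.
  rewrite sumR_Zfun_by_parts, Nat.add_comm.
  rewrite (sumR_ext (k + g) (fun l => (sumR (S l) e - lag (fun j => sumR (S j) e) l) * mspline l x)
             (fun l => e l * mspline l x)) by (intros [|l] _; cbn [lag sumR]; ring).
  cbn [sumR]. destruct (k + g)%nat; cbn [lag sumR]; ring.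
Qed.

Lemma spline_space_mspline_span s : spline_space k g lam s ->
  exists e, forall x, lam O <= x <= lam (S g) ->
    s x = sumR (S (k + g)) (fun l => e l * mspline l x).
Proof.
  intros [hpieces [F [eF [hd hc]]]].
  assert (hp : forall i, (i <= g)%nat ->
            exists p, is_poly k p /\ forall x, lam i <= x <= lam (S i) -> F x = p x).
  { intros i hi. destruct (hpieces i hi) as [cc hcc].
    exists (fun x => sumR (S k) (fun j => cc j * x ^ j)).
    split; [apply is_poly_monomials; exists cc; auto|].
    intros x hx. pose proof (lam_le O i ltac:(lia) ltac:(lia)).
    pose proof (lam_le (S i) (S g) ltac:(lia) ltac:(lia)). rewrite eF; [apply hcc|]; auto; lra. }
  pose proof (spline_like_Derive_n F hd hc hp k (le_n k)) as HF.
  rewrite Nat.sub_diag, <- (Nat.succ_pred_pos k) in HF by lia.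
  destruct (bsp_span (pred k) F ltac:(lia) HF) as [d hF].
  rewrite (Nat.succ_pred_pos k) in hF by lia.
  exists (fun l => d l * (t (l + S k) - t l) / INR (S k)). intros x hx.
  rewrite <- eF, hF by exact hx. apply sumR_ext. intros l hl.
  rewrite bsp_mspline by lia. unfold Rdiv. ring.
Qed.

Lemma Zfun_span s : Zspace k g lam s ->
  exists c : nat -> R, forall x, lam O <= x <= lam (S g) ->
    s x = sumR (g + k) (fun j => c j * Zfun k g lam j x).
Proof.
  intros [hspl hint]. destruct (spline_space_mspline_span s hspl) as [e hs].
  set (mu := sumR (S (k + g)) e).
  assert (hab : lam O <= lam (S g)) by (apply lam_le; lia).
  assert (I1 : is_RInt (fun x => sumR (g + k) (fun j => sumR (S j) e * Zfun k g lam j x))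
                 (lam O) (lam (S g)) 0).
  { rewrite <- (sumR_eq0 (g + k) (fun _ => 0)) by auto. apply is_RInt_sumR. intros j hj.
    rewrite <- (Rmult_0_r (sumR (S j) e)), <- (unit_vec_neq (k + g) j) by lia.
    apply (is_RInt_scal (Zfun k g lam j)), is_RInt_Zfun. }
  assert (I2 : is_RInt (fun x => mu * mspline (k + g) x) (lam O) (lam (S g)) 0).
  { apply (is_RInt_ext (fun x => minus (s x) (sumR (g + k) (fun j => sumR (S j) e * Zfun k g lam j x)))).
    - rewrite Rmin_left, Rmax_right by exact hab. intros x hx.
      change (s x - sumR (g + k) (fun j => sumR (S j) e * Zfun k g lam j x) = mu * mspline (k + g) x).
      rewrite sumR_Zfun_partial_sums, <- hs by lra. fold mu. ring.
    - rewrite <- (Rminus_0_r 0). apply (is_RInt_minus s _ _ _ 0 0 hint I1). }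
  pose proof (is_RInt_scal _ _ _ mu _ is_RInt_mspline_last) as I3.
  change (is_RInt (fun y => mu * mspline (k + g) y) (lam O) (lam (S g)) (mu * 1)) in I3.
  apply (is_RInt_unique (V := R_CompleteNormedModule)) in I2, I3. rewrite I2 in I3.
  exists (fun j => sumR (S j) e). intros x hx.
  rewrite sumR_Zfun_partial_sums, <- hs by exact hx. fold mu. replace mu with 0 by lra. ring.
Qed.
End ExtendedKnots.

Theorem theorem2 (k g : nat) (a b : R) (lam : nat -> R)
  (hk : (1 <= k)%nat) (hab : a < b)
  (h0 : lam O = a) (hg : lam (S g) = b)
  (hinc : forall i, (i <= g)%nat -> lam i < lam (S i)) :
  (* each Z_i lies in the space *)
  (forall j, (j < g + k)%nat -> Zspace k g lam (Zfun k g lam j)) /\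
  (* linear independence on [a,b] *)
  (forall c : nat -> R,
     (forall x, a <= x <= b -> sumR (g + k) (fun j => c j * Zfun k g lam j x) = 0) ->
     forall j, (j < g + k)%nat -> c j = 0) /\
  (* spanning *)
  (forall s : R -> R, Zspace k g lam s ->
     exists c : nat -> R, forall x, a <= x <= b ->
       s x = sumR (g + k) (fun j => c j * Zfun k g lam j x)).
Proof.
  subst a b. split; [|split].
  - exact (Zfun_in_Zspace k g lam hinc hk).
  - exact (Zfun_independent k g lam hinc hk).
  - exact (Zfun_span k g lam hinc hk).
Qed.
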